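(* Let $K=3$ and let $l\ge m\ge 2$ be integers. Then \[ h(l,\,m,\,0)\ \le\ h(l-1,\,m-1,\,2). \]
   Context: For a vector $\vec n=(n_1,n_2,n_3)$ of nonnegative integers, the following random process is run: stocks start at $\vec n^{(0)}=\vec n$; at each step $t=1,2,\dots$, as long as at least two coordinates of $\vec n^{(t-1)}$ are nonzero, an index $i$ is chosen uniformly at random (independently of the past) among the indices with $n_i^{(t-1)}>0$, and $\vec n^{(t)}=\vec n^{(t-1)}-\vec e_i$ ($\vec e_i$ the $i$-th standard unit vector). The process stops at the first time $T$ at which at most one coordinate is nonzero, and $h(\vec n)=\mathbb{E}[T]$. Equivalently, with $\operatorname{support}(\vec n)=\{i:n_i\ne 0\}$: $h(\vec n)=0$ if $|\operatorname{support}(\vec n)|\le1$, and otherwise $h(\vec n)=1+\frac{1}{|\operatorname{support}(\vec n)|}\sum_{i\in\operatorname{support}(\vec n)}h(\vec n-\vec e_i)$. *)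

From mathcomp Require Import all_boot all_order all_algebra.
Set Implicit Arguments. Unset Strict Implicit. Unset Printing Implicit Defensive.
Import Order.TTheory GRing.Theory Num.Theory.
Local Open Scope ring_scope.


Definition supp_size (n1 n2 n3 : nat) : nat :=
  ((n1 != 0%N) + (n2 != 0%N) + (n3 != 0%N))%N.

(* fuel-based version of the recursion
   h(n) = 0 if |supp n| <= 1,
   h(n) = 1 + 1/|supp n| * sum_{i in supp n} h(n - e_i) otherwise.
   Each step lowers n1+n2+n3 by one, so fuel n1+n2+n3 suffices. *)
Fixpoint hfuel (fuel : nat) (n1 n2 n3 : nat) : rat :=
  match fuel with
  | 0%N => 0
  | k.+1 =>
    if (supp_size n1 n2 n3 <= 1)%N then 0
    else 1 + (supp_size n1 n2 n3)%:R^-1 *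
             ( (if n1 == 0%N then 0 else hfuel k n1.-1 n2 n3)
             + (if n2 == 0%N then 0 else hfuel k n1 n2.-1 n3)
             + (if n3 == 0%N then 0 else hfuel k n1 n2 n3.-1))
  end.

(* h(n) = E[T] for the stock process with K = 3 *)
Definition h (n1 n2 n3 : nat) : rat := hfuel (n1 + n2 + n3) n1 n2 n3.

From mathcomp Require Import all_boot all_order all_algebra.
From mathcomp Require Import zify lra.
Import Order.TTheory GRing.Theory Num.Theory.
Local Open Scope ring_scope.

(* Write g(a, b) = h(a, b, 0) for the process with two stocks.  Opening the
   recursion once at h(l-1, m-1, 2), where all three stocks are positive, and
   comparing with g(l, m) = 1 + (g(l-1, m) + g(l, m-1)) / 2, an induction on
   (l, m) reduces the claim to g(a+1, b+1) <= h(a, b, 1) + 1.  That bound is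
   proved in the same way from g(a+1, b+1) <= g(a, b) + 2, and the base cases
   with a stock equal to 0 or 1 follow from g(1, n) <= 2. *)

Lemma hfuel_fuel_irrelevant k1 k2 n1 n2 n3 :
  (n1 + n2 + n3 <= k1)%N -> (n1 + n2 + n3 <= k2)%N ->
  hfuel k1 n1 n2 n3 = hfuel k2 n1 n2 n3.
Proof.
elim: k1 k2 n1 n2 n3 => [|k1 IH] [|k2] n1 n2 n3 Hk1 Hk2 //.
1,2: by have [-> [-> ->]] : n1 = 0%N /\ n2 = 0%N /\ n3 = 0%N by lia.
rewrite /=; case: ifP => // _; congr (1 + _ * (_ + _ + _)).
- by case: eqP => // ?; apply: IH; lia.
- by case: eqP => // ?; apply: IH; lia.
- by case: eqP => // ?; apply: IH; lia.
Qed.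

Lemma h_supp_le1 n1 n2 n3 : (supp_size n1 n2 n3 <= 1)%N -> h n1 n2 n3 = 0.
Proof. by rewrite /h; case: (n1 + n2 + n3)%N => //= k ->. Qed.

Lemma hE n1 n2 n3 : (1 < supp_size n1 n2 n3)%N -> h n1 n2 n3 =
  1 + (supp_size n1 n2 n3)%:R^-1 *
      ( (if n1 == 0%N then 0 else h n1.-1 n2 n3)
      + (if n2 == 0%N then 0 else h n1 n2.-1 n3)
      + (if n3 == 0%N then 0 else h n1 n2 n3.-1)).
Proof.
move=> supp_gt1; rewrite /h; case E: (n1 + n2 + n3)%N => [|k].
  by move: supp_gt1; have [-> [-> ->]] : n1 = 0%N /\ n2 = 0%N /\ n3 = 0%N by lia.
rewrite /= leqNgt supp_gt1 /=; congr (1 + _ * (_ + _ + _)).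
- by case: eqP => // ?; apply: hfuel_fuel_irrelevant; lia.
- by case: eqP => // ?; apply: hfuel_fuel_irrelevant; lia.
- by case: eqP => // ?; apply: hfuel_fuel_irrelevant; lia.
Qed.

Lemma hSSS a b c : h a.+1 b.+1 c.+1 =
  1 + 3%:R^-1 * (h a b.+1 c.+1 + h a.+1 b c.+1 + h a.+1 b.+1 c).
Proof. by rewrite hE. Qed.

Lemma hSS0 a b : h a.+1 b.+1 0 = 1 + 2%:R^-1 * (h a b.+1 0 + h a.+1 b 0).
Proof. by rewrite hE //= addr0. Qed.

Lemma h0b0 b : h 0 b 0 = 0. Proof. by apply: h_supp_le1; case: b. Qed.
Lemma ha00 a : h a 0 0 = 0. Proof. by apply: h_supp_le1; case: a. Qed.

Lemma h_ge0 a b c : 0 <= h a b c.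
Proof.
rewrite /h; move: (a + b + c)%N => k; elim: k a b c => //= k IH n1 n2 n3.
case: ifP => // _.
apply: addr_ge0 => //; apply: mulr_ge0; first by rewrite invr_ge0 ler0n.
by apply: addr_ge0; [apply: addr_ge0|]; case: eqP.
Qed.

Lemma h_swap12 a b c : h a b c = h b a c.
Proof.
rewrite /h (addnC b); move: (a + b + c)%N => k; elim: k a b c => //= k IH a b c.
rewrite /supp_size (addnC (b != 0%N)); case: ifP => // _.
rewrite [in RHS](addrC (if b == 0%N then _ else _)).
by congr (1 + _ * (_ + _ + _)); case: eqP => // _; apply: IH.
Qed.

Lemma h_swap23 a b c : h a b c = h a c b.
Proof.
rewrite /h addnAC; move: (a + c + b)%N => k; elim: k a b c => //= k IH a b c.
rewrite /supp_size addnAC; case: ifP => // _.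
rewrite [in RHS]addrAC.
by congr (1 + _ * (_ + _ + _)); case: eqP => // _; apply: IH.
Qed.

Lemma h_1n0_le2 n : h 1 n 0 <= 2.
Proof. by elim: n => [|n IH]; rewrite ?ha00 // hSS0 h0b0; lra. Qed.

Lemma hSS0_le_add2 a b : h a.+1 b.+1 0 <= h a b 0 + 2.
Proof.
elim: a b => [|a IHa] b; first by rewrite h0b0 add0r h_1n0_le2.
elim: b => [|b IHb]; first by rewrite ha00 add0r h_swap12 h_1n0_le2.
rewrite (hSS0 a.+1 b.+1) (hSS0 a b); have := IHa b.+1; have := IHb; lra.
Qed.

Lemma hSS0_le_hab1 a b : h a.+1 b.+1 0 <= h a b 1 + 1.
Proof.
elim: a b => [|a IHa] b.
  rewrite (h_swap12 0) (h_swap23 b) (h_swap12 b 1) hSS0 h0b0.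
  have := h_ge0 1 b 0; lra.
elim: b => [|b IHb].
  rewrite (h_swap23 a.+1 0 1) hSS0 ha00; have := h_ge0 a.+1 1 0; lra.
rewrite hSSS; have := IHb; have := IHa b.+1; have := hSS0_le_add2 a.+1 b.+1.
rewrite (hSS0 a.+1 b.+1); lra.
Qed.

Lemma h1SS0_le b : h 1 b.+2 0 <= h 0 b.+1 2.
Proof.
rewrite (h_swap12 0) (h_swap23 b.+1) (h_swap12 b.+1 2) (hSS0 1 b) (hSS0 0 b.+1) h0b0.
have := h_ge0 2 b 0; lra.
Qed.

Lemma hSS10_le a : h a.+2 1 0 <= h a.+1 0 2.
Proof.
rewrite (h_swap23 a.+1 0 2) (hSS0 a 1) (hSS0 a.+1 0) ha00; have := h_ge0 a 2 0; lra.
Qed.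

Lemma hSS0_le_hab2_step a b :
  h a.+1 b.+2 0 <= h a b.+1 2 -> h a.+2 b.+1 0 <= h a.+1 b 2 ->
  h a.+2 b.+2 0 <= h a.+1 b.+1 2.
Proof.
move=> IHa IHb; rewrite hSSS.
have := hSS0_le_hab1 a.+1 b.+1; rewrite hSS0; lra.
Qed.

Lemma hSS0_le_hab2 a b : h a.+2 b.+2 0 <= h a.+1 b.+1 2.
Proof.
elim: a b => [|a IHa]; elim=> [|b IHb].
- exact: hSS0_le_hab2_step (h1SS0_le 0) (hSS10_le 0).
- exact: hSS0_le_hab2_step (h1SS0_le b.+1) IHb.
- exact: hSS0_le_hab2_step (IHa 0) (hSS10_le a.+1).
- exact: hSS0_le_hab2_step (IHa b.+1) IHb.
Qed.

Theorem lemma6 (l m : nat) (hm : (2 <= m)%N) (hlm : (m <= l)%N) :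
  h l m 0 <= h l.-1 m.-1 2.
Proof. by case: l m hm hlm => [|[|a]] [|[|b]] //= _ _; apply: hSS0_le_hab2. Qed.
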